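(* In the errorless symmetric relay network described in the context, the greedy policy $G$ is optimal for minimizing the average sum AoI at the destination nodes: for every horizon $T\ge1$, $G$ minimizes $\frac{1}{TK}\sum_{t=1}^T\sum_{k=1}^K h_k^{\pi}(t)$ over all policies $\pi$. Furthermore, for every time slot $t$, $G$ minimizes the instantaneous sums $\frac1K\sum_{k=1}^K h_k^{\pi}(t)$ and $\frac1K\sum_{k=1}^K g_k^{\pi}(t)$ over all policies $\pi$.
   Context: Fix integers $K\ge 2$ and $S,U$ with $1\le S<K$, $1\le U<K$, and $S=U$. There are $K$ processes indexed by $k\in\{1,\dots,K\}$ and time slots $t=1,2,\dots$. The state at time $t$ consists of relay AoI values $g_k(t)$ and destination AoI values $h_k(t)$, with $g_k(1)=h_k(1)=1$ for all $k$. A policy $\pi$ is a map assigning to the current state a pair $(\mathcal{S}^{\pi}(t),\mathcal{U}^{\pi}(t))$ of subsets of $\{1,\dots,K\}$ with $|\mathcal{S}^{\pi}(t)|=S$ and $|\mathcal{U}^{\pi}(t)|=U$. Errorless dynamics: $g_k(t+1)=1$ if $k\in\mathcal{S}(t)$, else $g_k(t+1)=g_k(t)+1$; $h_k(t+1)=g_k(t)+1$ if $k\in\mathcal{U}(t)$, else $h_k(t+1)=h_k(t)+1$. Write $g_k^\pi(t),h_k^\pi(t)$ for the sequences under $\pi$. The greedy policy $G$ chooses at each time $t$ a set $\mathcal{S}^G(t)$ of $S$ indices with the largest values $g_k(t)$ (i.e. maximizing $\sum_{k\in\mathcal{S}}g_k(t)$ over $|\mathcal{S}|=S$) and a set $\mathcal{U}^G(t)$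 of $U$ indices with the largest gaps $h_k(t)-g_k(t)$ (i.e. maximizing $\sum_{k\in\mathcal{U}}(h_k(t)-g_k(t))$ over $|\mathcal{U}|=U$). *)

From mathcomp Require Import all_boot all_order all_algebra.
Set Implicit Arguments. Unset Strict Implicit. Unset Printing Implicit Defensive.
Import Order.TTheory GRing.Theory Num.Theory.

(* State: relay AoI g and destination AoI h, indexed by processes 'I_K
   (process k in {1..K} is the ordinal k-1). *)
Definition state (K : nat) : Type := ('I_K -> nat) * ('I_K -> nat).

(* A (stationary) policy: map from current state to (sampled set, updated set). *)
Definition policy (K : nat) : Type := state K -> {set 'I_K} * {set 'I_K}.

Definition valid_policy (K S U : nat) (pi : policy K) : Prop :=
  forall st : state K, #|(pi st).1| = S /\ #|(pi st).2| = U.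

Definition step (K : nat) (st : state K) (a : {set 'I_K} * {set 'I_K}) : state K :=
  (fun k => if k \in a.1 then 1%N else (st.1 k).+1,
   fun k => if k \in a.2 then (st.1 k).+1 else (st.2 k).+1).

Definition init_state (K : nat) : state K := (fun _ => 1%N, fun _ => 1%N).

(* traj pi n = state at time slot t = n+1. *)
Fixpoint traj (K : nat) (pi : policy K) (n : nat) : state K :=
  match n with
  | 0 => init_state K
  | n'.+1 => let st := traj pi n' in step st (pi st)
  end.

Definition gAoI (K : nat) (pi : policy K) (t : nat) (k : 'I_K) : nat :=
  (traj pi t.-1).1 k.
Definition hAoI (K : nat) (pi : policy K) (t : nat) (k : 'I_K) : nat :=
  (traj pi t.-1).2 k.

Definition greedy (K S U : nat) (G : policy K) : Prop :=
  valid_policy S U G /\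
  forall st : state K,
    (forall A : {set 'I_K}, #|A| = S ->
        (\sum_(k in A) st.1 k <= \sum_(k in (G st).1) st.1 k)%N) /\
    (forall B : {set 'I_K}, #|B| = U ->
        (\sum_(k in B) ((st.2 k)%:Z - (st.1 k)%:Z)
         <= \sum_(k in (G st).2) ((st.2 k)%:Z - (st.1 k)%:Z))%R).

Local Open Scope ring_scope.

Definition avg_sum_h (K : nat) (pi : policy K) (T : nat) : rat :=
  (\sum_(1 <= t < T.+1) \sum_(k < K) hAoI pi t k)%N%:R / (T * K)%N%:R.

Definition inst_h (K : nat) (pi : policy K) (t : nat) : rat :=
  (\sum_(k < K) hAoI pi t k)%N%:R / K%:R.
Definition inst_g (K : nat) (pi : policy K) (t : nat) : rat :=
  (\sum_(k < K) gAoI pi t k)%N%:R / K%:R.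

From mathcomp Require Import all_boot all_order all_algebra.
From mathcomp Require Import zify.
Import Order.TTheory GRing.Theory Num.Theory.
Set Implicit Arguments. Unset Strict Implicit.

(* Layer cake: [sum_k g_k = sum_m #{k | g_k > m}].  Since [g' = 1] on the
   sampled set and [g + 1] elsewhere, [{g' > m + 1}] is [{g > m}] minus the
   sampled set; it has at least [#{g > m} - S] elements, with equality when the
   sampled set consists of S largest ages.  By induction every level set of the
   greedy relay ages is minimal, hence so is [sum_k g_k].
   Any policy has [h' >= g + 1].  When [S = U] the greedy policy keeps at most
   [U] processes with [g < h] (only sampled processes can become so); these are
   exactly the ones with positive gap [h - g], so it updates all of them and
   achieves [h' = g + 1].  The bound on [h] thus follows from the one on [g]. *)

Section MaxSumSet.

Variables (T : finType) (S : nat).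

Lemma max_sum_set_le (R : numDomainType) (f : T -> R) (A : {set T}) :
  #|A| = S ->
  (forall B : {set T}, #|B| = S -> \sum_(k in B) f k <= \sum_(k in A) f k)%R ->
  forall j k, j \in A -> k \notin A -> (f k <= f j)%R.
Proof.
move=> cardA maxA j k jA kA.
have kAj : k \notin A :\ j by rewrite in_setD1 (negbTE kA) andbF.
have cardB : #|k |: (A :\ j)| = S.
  by rewrite cardsU1 kAj -cardA (cardsD1 j A) jA.
by have := maxA _ cardB; rewrite big_setU1 //= (big_setD1 _ jA) /= lerD2r.
Qed.

Lemma max_sum_set_le_nat (f : T -> nat) (A : {set T}) :
  #|A| = S ->
  (forall B : {set T}, #|B| = S -> \sum_(k in B) f k <= \sum_(k in A) f k) ->
  forall j k, j \in A -> k \notin A -> f k <= f j.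
Proof.
move=> cardA maxA j k jA kA; rewrite -(ler_nat int).
apply: (max_sum_set_le (f := fun k => ((f k)%:R : int)%R)) jA kA => // B cardB.
by rewrite -!natr_sum ler_nat maxA.
Qed.

Lemma card_gtD_max_sum_set (f : T -> nat) (A : {set T}) m :
  #|A| = S ->
  (forall B : {set T}, #|B| = S -> \sum_(k in B) f k <= \sum_(k in A) f k) ->
  #|[set k | m < f k] :\: A| = #|[set k | m < f k]| - S.
Proof.
move=> cardA maxA; set D := [set k | m < f k].
have [AD | /subsetPn[j jA]] := boolP (A \subset D); first by rewrite cardsDS ?cardA.
rewrite inE -leqNgt => fj_le_m.
have DA : D \subset A.
  apply/subsetP => k; rewrite inE; apply: contraLR => kA.
  by rewrite -leqNgt (leq_trans (max_sum_set_le_nat cardA maxA jA kA)).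
rewrite (_ : D :\: A = set0) ?cards0; last by apply/eqP; rewrite setD_eq0.
by apply/esym/eqP; rewrite subn_eq0 -cardA subset_leq_card.
Qed.

Lemma max_sum_set_supp (R : numDomainType) (f : T -> R) (A : {set T}) :
  #|A| = S ->
  (forall B : {set T}, #|B| = S -> \sum_(k in B) f k <= \sum_(k in A) f k)%R ->
  (forall k, 0 <= f k)%R -> #|[set k | (0 < f k)%R]| <= S ->
  [set k | (0 < f k)%R] \subset A.
Proof.
move=> cardA maxA f_ge0 cardP; apply/subsetP => k; rewrite inE => fk_gt0.
apply/negPn/negP => kA.
have [j jA fj0] : exists2 j, j \in A & f j = 0%R.
  have /subsetPn[j jA] : ~~ (A \subset [set k | (0 < f k)%R]).
    apply/negP => AP.
    have : k |: A \subset [set k | (0 < f k)%R] by rewrite subUset sub1set inE fk_gt0.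
    move/subset_leq_card/leq_trans/(_ cardP); rewrite cardsU1 kA cardA.
    by rewrite ltnn.
  by rewrite inE lt0r f_ge0 andbT negbK => /eqP; exists j.
by have := max_sum_set_le cardA maxA jA kA; rewrite fj0 lt_geF.
Qed.

End MaxSumSet.

Lemma sum_ord_lt x B : \sum_(m < B) (m < x : nat) = minn x B.
Proof.
elim: B => [|B IH]; first by rewrite big_ord0 minn0.
by rewrite big_ord_recr /= IH; case: ltnP => /=; lia.
Qed.

Lemma sum_card_gt (T : finType) (x : T -> nat) B : (forall k, x k <= B) ->
  \sum_k x k = \sum_(m < B) #|[set k | m < x k]|.
Proof.
move=> x_le; transitivity (\sum_k \sum_(m < B) (m < x k : nat)).
  by apply: eq_bigr => k _; rewrite sum_ord_lt; apply/esym/minn_idPl.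
rewrite exchange_big; apply: eq_bigr => m _.
by rewrite -sum1_card [RHS]big_mkcond; apply: eq_bigr => k _; rewrite inE; case: ifP.
Qed.

Section Trajectories.

Variable K : nat.
Implicit Types (st : state K) (pi : policy K).

Lemma step_g_gt_succ st a m :
  [set k | m.+1 < (step st a).1 k] = [set k | m < st.1 k] :\: a.1.
Proof. by apply/setP => k; rewrite !inE /step /=; case: ifP. Qed.

Lemma step_g_gt0 st a : [set k | 0 < (step st a).1 k] = setT.
Proof. by apply/setP => k; rewrite !inE /step /=; case: ifP. Qed.

Lemma traj_g_le_h pi n k : (traj pi n).1 k <= (traj pi n).2 k.
Proof.
elim: n k => [|n IH] k //=; have := IH k.
by rewrite /step /=; case: ifP; case: ifP => //; lia.
Qed.

Lemma traj_g_le pi n k : (traj pi n).1 k <= n.+1.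
Proof.
by elim: n k => [|n IH] k //=; rewrite /step /=; case: ifP => // _; rewrite ltnS.
Qed.

Lemma traj_h_succ_ge pi n k : ((traj pi n).1 k).+1 <= (traj pi n.+1).2 k.
Proof. by rewrite /= /step /=; case: ifP => // _; rewrite ltnS traj_g_le_h. Qed.

End Trajectories.

Definition stale K (st : state K) : {set 'I_K} := [set k | st.1 k < st.2 k].

Section Greedy.

Variables (K S U : nat) (G : policy K).
Hypothesis greedyG : greedy S U G.
Implicit Types (pi : policy K) (st : state K).

Lemma card_g_gt_greedy_le pi : valid_policy S U pi -> forall n m,
  #|[set k | m < (traj G n).1 k]| <= #|[set k | m < (traj pi n).1 k]|.
Proof.
move=> valid_pi; elim=> [|n IH] [|m] //=; rewrite ?step_g_gt0 // !step_g_gt_succ.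
have [[cardA _] [maxA _]] := (greedyG.1 (traj G n), greedyG.2 (traj G n)).
have [cardA' _] := valid_pi (traj pi n).
rewrite (card_gtD_max_sum_set _ cardA maxA) cardsD -cardA'.
by apply: leq_sub (IH m) _; rewrite subset_leq_card ?subsetIr.
Qed.

Lemma sum_g_greedy_le pi n : valid_policy S U pi ->
  \sum_k (traj G n).1 k <= \sum_k (traj pi n).1 k.
Proof.
move=> valid_pi; rewrite (sum_card_gt (traj_g_le G n)) (sum_card_gt (traj_g_le pi n)).
by apply: leq_sum => m _; apply: card_g_gt_greedy_le.
Qed.

Lemma stale_sub_greedy_update st : (forall k, st.1 k <= st.2 k) ->
  #|stale st| <= U -> stale st \subset (G st).2.
Proof.
move=> g_le_h card_stale.
have [[_ cardB] [_ maxB]] := (greedyG.1 st, greedyG.2 st).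
have staleE : stale st = [set k | (0 < (st.2 k)%:Z - (st.1 k)%:Z)%R].
  by apply/setP => k; rewrite !inE subr_gt0 ltz_nat.
rewrite staleE; apply: max_sum_set_supp cardB maxB _ _; rewrite -?staleE //.
by move=> k; rewrite subr_ge0 lez_nat g_le_h.
Qed.

Hypothesis eqSU : S = U.

Lemma card_stale_greedy n : #|stale (traj G n)| <= U.
Proof.
elim: n => [|n IH].
  by rewrite (_ : stale _ = set0) ?cards0 //; apply/setP => k; rewrite !inE.
have upd := stale_sub_greedy_update (traj_g_le_h G n) IH.
have [cardA _] := greedyG.1 (traj G n).
rewrite -eqSU -cardA; apply: subset_leq_card; apply/subsetP => k.
rewrite inE /= /step /=; case: ifP => // _; case: ifP; first by rewrite ltnn.
by move=> kB; rewrite ltnS => kst; rewrite -kB (subsetP upd) // inE.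
Qed.

Lemma greedy_h_succ n k : (traj G n.+1).2 k = ((traj G n).1 k).+1.
Proof.
have upd := stale_sub_greedy_update (traj_g_le_h G n) (card_stale_greedy n).
rewrite /= /step /=; case: ifP => // kB; apply/eqP; rewrite eqSS eqn_leq traj_g_le_h andbT.
by rewrite leqNgt; apply: contraFN kB => kst; rewrite (subsetP upd) // inE.
Qed.

Lemma sum_h_greedy_le pi n : valid_policy S U pi ->
  \sum_k (traj G n).2 k <= \sum_k (traj pi n).2 k.
Proof.
case: n => [|n] // valid_pi.
apply: (@leq_trans (\sum_k ((traj pi n).1 k).+1)); last first.
  by apply: leq_sum => k _; apply: traj_h_succ_ge.
under eq_bigr => k _ do rewrite greedy_h_succ -addn1.
under [X in _ <= X]eq_bigr => k _ do rewrite -addn1.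
by rewrite !big_split leq_add2r sum_g_greedy_le.
Qed.

End Greedy.

Local Open Scope ring_scope.

Theorem theorem2 (K S U : nat) (hK : (2 <= K)%N) (hS1 : (1 <= S)%N) (hSK : (S < K)%N)
    (hU1 : (1 <= U)%N) (hUK : (U < K)%N) (hSU : S = U)
    (G : policy K) (hG : greedy S U G) :
  forall pi : policy K, valid_policy S U pi ->
    (forall T : nat, (1 <= T)%N -> avg_sum_h G T <= avg_sum_h pi T) /\
    (forall t : nat, (1 <= t)%N ->
        inst_h G t <= inst_h pi t /\ inst_g G t <= inst_g pi t).
Proof.
move=> pi valid_pi.
have sum_h t : (\sum_(k < K) hAoI G t k <= \sum_(k < K) hAoI pi t k)%N.
  exact: (sum_h_greedy_le hG hSU t.-1 valid_pi).
have sum_g t : (\sum_(k < K) gAoI G t k <= \sum_(k < K) gAoI pi t k)%N.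
  exact: (sum_g_greedy_le hG t.-1 valid_pi).
split=> [T _ | t _]; first by rewrite ler_wpM2r ?invr_ge0 // ler_nat leq_sum.
by rewrite !ler_wpM2r ?invr_ge0 // ler_nat.
Qed.
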